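(* Let $K\in\{\mathbb R,\mathbb C,\mathbb H\}$ and let $(E,d)$ be a metric vector space over $K$ such that $d$ is $C_0$-translation invariant and $(C_1,C_2,C_3)$-lipschitz multiplicative. Let $d_0(x,y)=\int_{\mathbb U}d(ux,uy)\,d\mu(u)$, $\delta(x,y)=\lim_{n\to\infty}\frac1n d(nx,ny)$, $\delta_0(x,y)=\lim_{n\to\infty}\frac1n d_0(nx,ny)$. Let (i) $E_0=\{x\in E:\ \delta(ux,0)=0\text{ for all }u\in\mathbb U\}$; (ii) $E_1=\{x\in E:\delta_0(x,0)=0\}$; (iii) $E_2$ the maximal linear subspace of $E$ on which $d_0$ is bounded; (iv) $E_3$ the maximal linear subspace of $E$ on which $d$ is bounded. Then $E_0=E_1=E_2=E_3$.
   Context: A metric vector space is a topological vector space over $K$ whose topology is generated by the metric $d$. $\mathbb U=\{u\in K:|u|=1\}$, $\mu$ the right-invariant Haar probability measure on $\mathbb U$. $d$ is $C_0$-translation invariant if $d(x+z,y+z)\le d(x,y)+C_0$ for all $x,y,z$. $(C_1,C_2,C_3)$-lipschitz multiplicative ($C_1\ge1$, $C_2,C_3\ge0$) means $C_1^{-1}|\lambda|d(x,y)-C_2|\lambda|-C_3\le d(\lambda x,\lambda y)\le C_1|\lambda|d(x,y)+C_2|\lambda|+C_3$ for all $\lambda\in K$, $x,y\in E$. A distance $\rho$ is bounded on a set $A$ if $\sup_{x,y\in A}\rho(x,y)<\infty$. (Under these hypotheses the limits defining $\delta,\delta_0$ exist.) *)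

From HB Require Import structures.
From mathcomp Require Import all_boot all_order all_algebra.
From mathcomp Require Import all_classical all_reals all_analysis.
Set Implicit Arguments. Unset Strict Implicit. Unset Printing Implicit Defensive.
Import Order.TTheory GRing.Theory Num.Theory numFieldNormedType.Exports.
Local Open Scope classical_set_scope.
Local Open Scope ring_scope.

(* ---------- Quaternions, realised as R^4 = ((R*R)*R)*R, which carries the
   (Borel = product) sigma-algebra of mathcomp-analysis. *)
Section Quat.
Variable R : realType.
Definition quat := (((R * R) * R) * R)%type.
Definition qa (q : quat) : R := q.1.1.1.
Definition qb (q : quat) : R := q.1.1.2.
Definition qc (q : quat) : R := q.1.2.
Definition qd (q : quat) : R := q.2.
Definition mkq (a b c d : R) : quat := (a, b, c, d).
Definition qreal (r : R) : quat := mkq r 0 0 0.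
Definition qone : quat := qreal 1.
Definition qadd (p q : quat) : quat :=
  mkq (qa p + qa q) (qb p + qb q) (qc p + qc q) (qd p + qd q).
Definition qsub (p q : quat) : quat :=
  mkq (qa p - qa q) (qb p - qb q) (qc p - qc q) (qd p - qd q).
Definition qmul (p q : quat) : quat :=
  mkq (qa p * qa q - qb p * qb q - qc p * qc q - qd p * qd q)
      (qa p * qb q + qb p * qa q + qc p * qd q - qd p * qc q)
      (qa p * qc q - qb p * qd q + qc p * qa q + qd p * qb q)
      (qa p * qd q + qb p * qc q - qc p * qb q + qd p * qa q).
Definition qnorm (q : quat) : R :=
  Num.sqrt (qa q ^+ 2 + qb q ^+ 2 + qc q ^+ 2 + qd q ^+ 2).
End Quat.

Inductive Kkind := KR | KC | KH.

Definition Kset (R : realType) (k : Kkind) : set (quat R) :=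
  match k with
  | KR => [set q | qb q = 0 /\ qc q = 0 /\ qd q = 0]
  | KC => [set q | qc q = 0 /\ qd q = 0]
  | KH => [set: quat R]
  end.

Definition Uset (R : realType) (k : Kkind) : set (quat R) :=
  [set u | Kset k u /\ qnorm u = 1].

Section Space.
Variables (R : realType) (k : Kkind) (E : zmodType).
Variable smul : quat R -> E -> E.
Variable d : E -> E -> R.

Definition K_vector_space : Prop :=
  (forall l x y, Kset k l -> smul l (x + y) = smul l x + smul l y) /\
  (forall l m x, Kset k l -> Kset k m -> smul (qadd l m) x = smul l x + smul m x) /\
  (forall l m x, Kset k l -> Kset k m -> smul (qmul l m) x = smul l (smul m x)) /\
  (forall x, smul (qone R) x = x).

Definition is_metric : Prop :=
  (forall x y, d x y = 0 <-> x = y) /\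
  (forall x y, d x y = d y x) /\
  (forall x y z, d x z <= d x y + d y z).

Definition is_tvs : Prop :=
  (forall x y e, 0 < e -> exists2 r, 0 < r &
     forall x' y', d x x' < r -> d y y' < r -> d (x + y) (x' + y') < e) /\
  (forall l x e, Kset k l -> 0 < e -> exists2 r, 0 < r &
     forall l' x', Kset k l' -> qnorm (qsub l l') < r -> d x x' < r ->
       d (smul l x) (smul l' x') < e).

Definition translation_invariant (C0 : R) : Prop :=
  forall x y z, d (x + z) (y + z) <= d x y + C0.

Definition lipschitz_multiplicative (C1 C2 C3 : R) : Prop :=
  [/\ 1 <= C1, 0 <= C2, 0 <= C3 &
  forall l x y, Kset k l ->
    C1^-1 * qnorm l * d x y - C2 * qnorm l - C3 <= d (smul l x) (smul l y) /\
    d (smul l x) (smul l y) <= C1 * qnorm l * d x y + C2 * qnorm l + C3].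

Definition K_subspace (F : set E) : Prop :=
  F 0 /\ (forall x y, F x -> F y -> F (x + y)) /\
  (forall l x, Kset k l -> F x -> F (smul l x)).

Definition bounded_on (rho : E -> E -> R) (A : set E) : Prop :=
  exists M : R, forall x y, A x -> A y -> rho x y <= M.

(* F is THE maximal (i.e. greatest) linear subspace on which rho is bounded *)
Definition maximal_bounded_subspace (rho : E -> E -> R) (F : set E) : Prop :=
  [/\ K_subspace F, bounded_on rho F &
      forall G, K_subspace G -> bounded_on rho G -> G `<=` F].
End Space.

Definition right_invariant_haar (R : realType) (k : Kkind)
    (mu : probability (quat R) R) : Prop :=
  mu (Uset k) = 1%E /\
  forall v, Uset k v -> forall A : set (quat R), measurable A ->
    mu ((fun u => qmul u v) @^-1` A) = mu A.

Definition d0_of (R : realType) (k : Kkind) (E : zmodType)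
    (smul : quat R -> E -> E) (d : E -> E -> R) (mu : probability (quat R) R)
    (x y : E) : R :=
  fine (\int[mu]_(u in Uset k) (d (smul u x) (smul u y))%:E)%E.

Definition asymp_of (R : realType) (E : zmodType) (smul : quat R -> E -> E)
    (rho : E -> E -> R) (x y : E) : R :=
  limn (fun n : nat => rho (smul (qreal n%:R) x) (smul (qreal n%:R) y) / n%:R).

From HB Require Import structures.
From mathcomp Require Import all_boot all_order all_algebra.
From mathcomp Require Import all_classical all_reals all_analysis.
From mathcomp Require Import ring lra measurable_realfun.
Import Order.TTheory GRing.Theory Num.Theory numFieldNormedType.Exports.
Local Open Scope classical_set_scope.
Local Open Scope ring_scope.
Set Implicit Arguments. Unset Strict Implicit. Unset Printing Implicit Defensive.

(* For every x, the sequence n |-> d(n x, 0) is subadditive up to the constant C0, so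
   by Fekete's lemma delta(x, 0) exists, and likewise for d0.  If delta(x, 0) = 0, the
   whole K-orbit of x lies within C3 of 0: writing l x = n^-1 (l (n x)) and using
   lipschitz multiplicativity twice bounds d(l x, 0) by C3 + O(d(n x, 0) / n + 1 / n).
   Conversely a bounded orbit gives delta = 0.  Hence E0 is the set of vectors with a
   bounded K-orbit: a subspace of d-diameter at most 2 C3 containing every subspace on
   which d is bounded.  On U the integrand d(u x, u y) lies between
   C1^-1 d(x, y) - C2 - C3 and C1 d(x, y) + C2 + C3, and mu(U) = 1, so d0 obeys the
   same bounds and everything transfers to d0. *)

Section QuaternionScalars.
Variable R : realType.
Implicit Types (a b : R) (l m q u : quat R).

Lemma qadd_real a b : qadd (qreal a) (qreal b) = qreal (a + b).
Proof. by rewrite /qadd /qreal /mkq /qa /qb /qc /qd /= addr0. Qed.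

Lemma qmul_real a b : qmul (qreal a) (qreal b) = qreal (a * b).
Proof. by rewrite /qmul /qreal /mkq /qa /qb /qc /qd /=; congr (_, _, _, _); ring. Qed.

Lemma qmul_realC a u : qmul (qreal a) u = qmul u (qreal a).
Proof.
case: u => [[[x y] z] w].
by rewrite /qmul /qreal /mkq /qa /qb /qc /qd /=; congr (_, _, _, _); ring.
Qed.

Lemma qnorm_ge0 q : 0 <= qnorm q.
Proof. exact: sqrtr_ge0. Qed.

Lemma qnorm_real a : qnorm (qreal a) = `|a|.
Proof. by rewrite /qnorm /qreal /mkq /qa /qb /qc /qd /= expr0n /= !addr0 sqrtr_sqr. Qed.

Lemma Kset_real k a : Kset k (qreal a).
Proof. by case: k. Qed.

Lemma Kset_qmul k l m : Kset k l -> Kset k m -> Kset k (qmul l m).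
Proof.
case: l => [[[a b] c] e]; case: m => [[[a' b'] c'] e'].
case: k => //=; rewrite /qmul /mkq /qa /qb /qc /qd /=.
- by move=> [-> [-> ->]] [-> [-> ->]]; split; [|split]; ring.
- by move=> [-> ->] [-> ->]; split; ring.
Qed.

Lemma Uset_qone k : Uset k (qone R).
Proof. by split; [exact: Kset_real | rewrite /qone qnorm_real normr1]. Qed.

End QuaternionScalars.

#[local] Hint Resolve Kset_real : core.

Section SublinearSequences.
Variable R : realType.
Implicit Types (a b : nat -> R) (c e : R).

Definition sublinear a := (fun n => a n / n%:R) @ \oo --> 0.

Lemma cvg_invn : (fun n : nat => (n%:R : R)^-1) @ \oo --> 0.
Proof. by rewrite -cvg_shiftS; exact: cvg_harmonic. Qed.

Lemma sublinear_le a b c e :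
  (forall n, 0 <= a n <= c * b n + e) -> sublinear b -> sublinear a.
Proof.
move=> hab hb; apply: (@squeeze_cvgr _ _ _ _ (fun=> 0) (fun n => c * (b n / n%:R) + e * n%:R^-1)).
- apply: nearW => n; have /andP[a0 ab] := hab n.
  rewrite divr_ge0 //= mulrA -mulrDl ler_wpM2r //.
- exact: cvg_cst.
- have := cvgD (cvgM (cvg_cst c) hb) (cvgM (cvg_cst e) cvg_invn).
  by rewrite !mulr0 addr0; apply.
Qed.

Lemma sublinear_bounded a c : (forall n, 0 <= a n <= c) -> sublinear a.
Proof.
move=> ha; apply: (@sublinear_le _ (fun=> 0) 0 c) => [n|].
  by rewrite mul0r add0r.
by rewrite /sublinear; under eq_fun do rewrite mul0r; exact: cvg_cst.
Qed.

Lemma subadditive_mulD b m :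
  (forall n p, b (n + p)%N <= b n + b p) ->
  forall q r, b (q * m + r)%N <= q%:R * b m + b r.
Proof.
move=> sb; elim=> [|q IH] r; first by rewrite mul0n add0n mul0r add0r.
rewrite mulSn -addnA (le_trans (sb _ _)) // mulrSr.
have := IH r; lra.
Qed.

(* Fekete's lemma: the limit is the infimum of the [b n / n], [n > 0]. *)
Lemma subadditive_cvgn b :
  (forall n, 0 <= b n) -> (forall n p, b (n + p)%N <= b n + b p) ->
  cvgn (fun n => b n / n%:R).
Proof.
move=> b0 sb.
pose S := [set b n / n%:R | n in [set n | (0 < n)%N]].
have hS : has_inf S.
  split; first by exists (b 1%N / 1%:R), 1%N.
  by exists 0 => _ [n _ <-]; rewrite divr_ge0.
apply/cvg_ex; exists (inf S); apply/cvgrPdist_le => e e0.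
have e20 : 0 < e / 2 by rewrite divr_gt0.
have [_ [m /= m0 <-] hm] := inf_adherent e20 hS.
pose K := \sum_(r < m) b r.
have K0 : 0 <= K by rewrite sumr_ge0.
have bn n : b n <= (n %/ m)%:R * b m + K.
  rewrite {1}(divn_eq n m) (le_trans (subadditive_mulD _ sb _ _)) // lerD2l.
  by rewrite /K (bigD1 (Ordinal (ltn_pmod n m0))) //= lerDl sumr_ge0.
have mR : 0 < m%:R :> R by rewrite ltr0n.
near=> n.
have n0 : (0 < n)%N by near: n; exact: nbhs_infty_gt.
have nR : 0 < n%:R :> R by rewrite ltr0n.
have lb : inf S <= b n / n%:R by apply: ge_inf; [case: hS | exists n].
have hK : K / n%:R <= e / 2.
  rewrite ler_pdivrMr // mulrC -ler_pdivrMr //; near: n; exact: nbhs_infty_ger.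
have hq : (n %/ m)%:R * b m / n%:R <= b m / m%:R.
  have qm : (n %/ m)%:R * m%:R <= n%:R :> R by rewrite -natrM ler_nat leq_divM.
  have t0 : 0 <= b m / m%:R by rewrite divr_ge0.
  have eb : b m = b m / m%:R * m%:R by rewrite divfK ?gt_eqF.
  set t := b m / m%:R in t0 eb *; rewrite {1}eb ler_pdivrMr //; nra.
have ub : b n / n%:R <= (n %/ m)%:R * b m / n%:R + K / n%:R.
  by rewrite -mulrDl ler_wpM2r // invr_ge0 ltW.
rewrite ler_norml; apply/andP; split; lra.
Unshelve. all: by end_near.
Qed.

Lemma quasi_subadditive_cvgn a c :
  (forall n, 0 <= a n) -> 0 <= c -> (forall n p, a (n + p)%N <= a n + a p + c) ->
  cvgn (fun n => a n / n%:R).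
Proof.
move=> a0 c0 sa.
have hb : cvgn (fun n => (a n + c) / n%:R).
  apply: subadditive_cvgn => [n|n p]; first by have := a0 n; lra.
  by have := sa n p; lra.
have -> : (fun n => a n / n%:R) = (fun n => (a n + c) / n%:R - c * n%:R^-1).
  by apply/funext => n; rewrite mulrDl addrK.
apply: is_cvgB => //; apply: is_cvgM; first exact: is_cvg_cst.
by apply/cvg_ex; exists 0; exact: cvg_invn.
Qed.

End SublinearSequences.

Section MetricVectorSpace.
Variables (R : realType) (k : Kkind) (E : zmodType) (smul : quat R -> E -> E).
Variables (d : E -> E -> R) (C0 C1 C2 C3 : R).
Hypotheses (hV : K_vector_space k smul) (hm : is_metric d).
Hypotheses (hT : translation_invariant d C0) (hL : lipschitz_multiplicative k smul d C1 C2 C3).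
Implicit Types (x y : E) (l : quat R) (n : nat).

Lemma smul0 l : Kset k l -> smul l 0 = 0.
Proof.
move=> Kl; have [smulDr _] := hV; have := smulDr l 0 0 Kl; rewrite addr0 => h.
by apply: (@addrI _ (smul l 0)); rewrite addr0 -h.
Qed.

Lemma smul_real1 x : smul (qreal 1) x = x.
Proof. by case: hV => [_ [_ [_ ->]]]. Qed.

Lemma smul_natD n m x :
  smul (qreal (n + m)%:R) x = smul (qreal n%:R) x + smul (qreal m%:R) x.
Proof. have [_ [smulDl _]] := hV; by rewrite natrD -qadd_real smulDl. Qed.

Lemma smul_realM (a b : R) x : smul (qreal a) (smul (qreal b) x) = smul (qreal (a * b)) x.
Proof. have [_ [_ [smulA _]]] := hV; by rewrite -smulA ?qmul_real. Qed.

Lemma smul_realC (a : R) l x : Kset k l ->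
  smul (qreal a) (smul l x) = smul l (smul (qreal a) x).
Proof.
move=> Kl; have [_ [_ [smulA _]]] := hV; by rewrite -smulA // qmul_realC smulA.
Qed.

Lemma dxx x : d x x = 0.
Proof. by case: hm => dP _; apply/dP. Qed.

Lemma d_ge0 x y : 0 <= d x y.
Proof. have [_ [dC dtri]] := hm; have := dtri x y x; rewrite dxx (dC y x); lra. Qed.

Lemma dist_dist_le x y x' y' : `|d x y - d x' y'| <= d x x' + d y y'.
Proof.
have [_ [dC dtri]] := hm; have := dtri x x' y; have := dtri x' y' y; have := dtri x' x y'.
have := dtri x y y'; rewrite (dC y' y) (dC x' x) ler_norml => *; apply/andP; split; lra.
Qed.

Lemma C0_ge0 : 0 <= C0.
Proof. by have := hT 0 0 0; rewrite addr0 dxx add0r. Qed.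

Lemma dist0D_le x y : d (x + y) 0 <= d x 0 + d y 0 + C0.
Proof.
have [_ [_ dtri]] := hm; have := dtri (x + y) (0 + y) 0; have := hT x 0 y.
rewrite add0r; lra.
Qed.

Lemma dist0Z_le l x : Kset k l -> d (smul l x) 0 <= C1 * qnorm l * d x 0 + C2 * qnorm l + C3.
Proof. move=> Kl; have [_ _ _ dZ] := hL; have [_] := dZ l x 0 Kl; by rewrite smul0. Qed.

Definition orbit_bounded : set E :=
  [set x | exists M, forall l, Kset k l -> d (smul l x) 0 <= M].

Lemma asymp_eq0P (rho : E -> E -> R) x :
  (forall y, 0 <= rho y 0) -> (forall y z, rho (y + z) 0 <= rho y 0 + rho z 0 + C0) ->
  asymp_of smul rho x 0 = 0 <-> sublinear (fun n => rho (smul (qreal n%:R) x) 0).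
Proof.
move=> rho_ge0 rhoD.
rewrite /asymp_of (_ : (fun n : nat => _) = (fun n => rho (smul (qreal n%:R) x) 0 / n%:R)).
  2: by apply/funext => n; rewrite smul0.
have cvg_rho : cvgn (fun n => rho (smul (qreal n%:R) x) 0 / n%:R).
  apply: (quasi_subadditive_cvgn _ C0_ge0) => // n m.
  by rewrite smul_natD rhoD.
by split => [h0 | ]; [rewrite /sublinear -[X in _ --> X]h0 | exact: cvg_lim].
Qed.

Lemma sublinear_orbit_le x l :
  sublinear (fun n => d (smul (qreal n%:R) x) 0) -> Kset k l -> d (smul l x) 0 <= C3.
Proof.
move=> hx Kl; have [C1_ge1 C2_ge0 _ _] := hL.
set q := qnorm l; have q_ge0 : 0 <= q := qnorm_ge0 l.
set y := smul l x.
pose h n := C1 * C1 * q * (d (smul (qreal n%:R) x) 0 / n%:R) +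
  (C1 * (C2 * q + C3) + C2) * n%:R^-1.
have h_cvg0 : h @ \oo --> 0.
  have := cvgD (cvgM (cvg_cst (C1 * C1 * q)) hx)
    (cvgM (cvg_cst (C1 * (C2 * q + C3) + C2)) (@cvg_invn R)).
  by rewrite !mulr0 addr0; apply.
rewrite -subr_le0; apply: (ler_cvg_to (cvg_cst _) h_cvg0).
near=> n.
have nR : 0 < n%:R :> R by rewrite ltr0n; near: n; exact: nbhs_infty_gt.
have t_ge0 : 0 <= n%:R^-1 :> R by rewrite invr_ge0 ltW.
have y_shrink : d y 0 <= C1 * n%:R^-1 * d (smul (qreal n%:R) y) 0 + C2 * n%:R^-1 + C3.
  have := dist0Z_le (smul (qreal n%:R) y) (Kset_real k n%:R^-1).
  by rewrite smul_realM mulVf ?gt_eqF // smul_real1 qnorm_real ger0_norm.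
have ny_le : d (smul (qreal n%:R) y) 0 <= C1 * q * d (smul (qreal n%:R) x) 0 + C2 * q + C3.
  by rewrite /y smul_realC //; exact: dist0Z_le.
have := ler_wpM2l (mulr_ge0 (le_trans ler01 C1_ge1) t_ge0) ny_le; move: y_shrink.
rewrite /h; set a := d (smul _ x) 0; set b := d (smul _ y) 0; set t := n%:R^-1.
lra.
Unshelve. all: by end_near.
Qed.

Lemma orbit_boundedP x :
  orbit_bounded x <-> sublinear (fun n => d (smul (qreal n%:R) x) 0).
Proof.
split => [[M hM] | hx]; last by exists C3 => l; exact: sublinear_orbit_le.
by apply: (@sublinear_bounded _ _ M) => n; rewrite d_ge0 hM.
Qed.

Lemma orbit_bounded_subspace : K_subspace k smul orbit_bounded.
Proof.
have [smulDr [_ [smulA _]]] := hV.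
split; [|split].
- by exists 0 => l Kl; rewrite smul0 // dxx.
- move=> x y [Mx hx] [My hy]; exists (Mx + My + C0) => l Kl.
  rewrite smulDr // (le_trans (dist0D_le _ _)) // !lerD2r lerD ?hx ?hy //.
- move=> m x Km [M hM]; exists M => l Kl.
  by rewrite -smulA // hM //; exact: Kset_qmul.
Qed.

Lemma orbit_bounded_le x l : orbit_bounded x -> Kset k l -> d (smul l x) 0 <= C3.
Proof. by move/orbit_boundedP; exact: sublinear_orbit_le. Qed.

Lemma maximal_orbit_bounded : maximal_bounded_subspace k smul d orbit_bounded.
Proof.
split; first exact: orbit_bounded_subspace.
- exists (C3 + C3) => x y hx hy; have [_ [dC dtri]] := hm.
  have := orbit_bounded_le hx (Kset_real k 1); have := orbit_bounded_le hy (Kset_real k 1).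
  rewrite !smul_real1; have := dtri x 0 y; rewrite (dC 0 y); lra.
- move=> G [G0 [_ GZ]] [M hM] x Gx; exists M => l Kl.
  by apply: hM => //; exact: GZ.
Qed.

Lemma asymp_eq0_orbit_bounded x : asymp_of smul d x 0 = 0 <-> orbit_bounded x.
Proof. by rewrite asymp_eq0P ?orbit_boundedP //; [move=> y; exact: d_ge0 | exact: dist0D_le]. Qed.

Lemma E0_orbit_bounded :
  [set x | forall u, Uset k u -> asymp_of smul d (smul u x) 0 = 0] = orbit_bounded.
Proof.
have [_ [_ Z]] := orbit_bounded_subspace.
apply/seteqP; split => x /= hx.
- by move: (hx _ (Uset_qone R k)); rewrite smul_real1 asymp_eq0_orbit_bounded.
- by move=> u [Ku _]; apply/asymp_eq0_orbit_bounded; exact: Z.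
Qed.

Section ComparableDistance.
Variable rho : E -> E -> R.
Hypotheses (rho_ge0 : forall x y, 0 <= rho x y).
Hypotheses (rhoD : forall x y, rho (x + y) 0 <= rho x 0 + rho y 0 + C0).
Hypotheses (rho_le : forall x y, rho x y <= C1 * d x y + C2 + C3).
Hypotheses (le_rho : forall x y, C1^-1 * d x y - C2 - C3 <= rho x y).

Lemma d_le_rho x y : d x y <= C1 * rho x y + C1 * (C2 + C3).
Proof.
have [C1_ge1 _ _ _] := hL; have C1_gt0 : 0 < C1 by lra.
rewrite -mulrDr -ler_pdivrMl //; have := le_rho x y; lra.
Qed.

Lemma asymp_comparable_eq0P x : asymp_of smul rho x 0 = 0 <-> orbit_bounded x.
Proof.
rewrite asymp_eq0P // orbit_boundedP; split => hx.
- apply: (sublinear_le (c := C1) (e := C1 * (C2 + C3))) hx => n.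
  by rewrite d_ge0 d_le_rho.
- apply: (sublinear_le (c := C1) (e := C2 + C3)) hx => n.
  by rewrite rho_ge0 addrA rho_le.
Qed.

Lemma maximal_orbit_bounded_comparable : maximal_bounded_subspace k smul rho orbit_bounded.
Proof.
have [C1_ge1 _ _ _] := hL.
have [sub [M hM] maxd] := maximal_orbit_bounded.
split => //.
- exists (C1 * M + C2 + C3) => x y hx hy.
  by rewrite (le_trans (rho_le x y)) // !lerD2r ler_wpM2l ?hM //; lra.
- move=> G hG [N hN]; apply: maxd => //.
  exists (C1 * N + C1 * (C2 + C3)) => x y Gx Gy.
  by rewrite (le_trans (d_le_rho x y)) // lerD2r ler_wpM2l ?hN //; lra.
Qed.

End ComparableDistance.
End MetricVectorSpace.

Section IntegralOnFullSet.
Context dT (T : measurableType dT) (R : realType) (P : probability T R) (D : set T).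
Hypotheses (mD : measurable D) (PD : P D = 1%E).
Implicit Types (f g h : T -> R) (c m M : R).

Lemma bounded_integrable f M :
  measurable_fun D f -> (forall x, D x -> `|f x| <= M) -> P.-integrable D (EFin \o f).
Proof.
move=> mf fM; apply: measurable_bounded_integrable => //.
  by rewrite (le_lt_trans (probability_le1 P mD)) // ltry.
exists M; split; first exact: num_real.
by move=> N MN x Dx; apply: le_trans (fM x Dx) _; rewrite ltW.
Qed.

Lemma Rintegral_cst_full c : \int[P]_(x in D) c = c.
Proof.
have PD1 : fine (P D) = 1 by move: PD => /= ->.
by rewrite Rintegral_cst // PD1 mulr1.
Qed.

Lemma Rintegral_bounds f m M :
  measurable_fun D f -> (forall x, D x -> m <= f x <= M) ->
  m <= \int[P]_(x in D) f x <= M.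
Proof.
move=> mf fmM.
have icst c : P.-integrable D (EFin \o cst c) by exact: finite_measure_integrable_cst.
have if_ : P.-integrable D (EFin \o f).
  apply: (@bounded_integrable _ (`|m| + `|M|)) => // x /fmM /andP[xm xM].
  have := ler_norm M; have := ler_norm (- m); rewrite normrN.
  have := normr_ge0 m; have := normr_ge0 M.
  rewrite ler_norml; move=> *; apply/andP; split; lra.
apply/andP; split.
- rewrite -[X in X <= _](Rintegral_cst_full m).
  by apply: le_Rintegral => // [|x /fmM /andP[] //]; exact: icst.
- rewrite -[X in _ <= X](Rintegral_cst_full M).
  by apply: le_Rintegral => // [|x /fmM /andP[] //]; exact: icst.
Qed.

Lemma le_Rintegral_add f g h c :
  P.-integrable D (EFin \o f) -> P.-integrable D (EFin \o g) -> P.-integrable D (EFin \o h) ->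
  (forall x, D x -> f x <= g x + h x + c) ->
  \int[P]_(x in D) f x <= \int[P]_(x in D) g x + \int[P]_(x in D) h x + c.
Proof.
move=> if_ ig ih fgh.
have icst : P.-integrable D (EFin \o cst c) by exact: finite_measure_integrable_cst.
have iD f1 f2 : P.-integrable D (EFin \o f1) -> P.-integrable D (EFin \o f2) ->
    P.-integrable D (EFin \o (fun x => f1 x + f2 x)).
  by move=> i1 i2; apply: eq_integrable (integrableD mD i1 i2) => // x _.
rewrite -(Rintegral_cst_full c) -RintegralD // -RintegralD //; last exact: iD.
by apply: le_Rintegral => //; apply: (iD) => //; exact: iD.
Qed.

End IntegralOnFullSet.

Lemma measurable_comp_countable_fibers dT dU (T : measurableType dT)
    (U : measurableType dU) (I : countType) (h : T -> I) (f : I -> U) :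
  (forall i, measurable (h @^-1` [set i])) -> measurable_fun setT (f \o h).
Proof.
move=> mh _ Y _; rewrite setTI.
have -> : (f \o h) @^-1` Y = \bigcup_i (h @^-1` [set i] `&` [set _ | Y (f i)]).
  by apply/seteqP; split => [x Yx | x [i _ [/= -> //]]]; exists (h x).
apply: countable_bigcupT_measurable => [|i]; first exact: countableP.
have [Yi|nYi] := pselect (Y (f i)).
- by rewrite (_ : [set _ | _] = setT) ?setIT //; apply/seteqP; split.
- by rewrite (_ : [set _ | _] = set0) ?setI0 //; apply/seteqP; split.
Qed.

Section QuaternionMeasurability.
Variable R : realType.
Implicit Types (q : quat R) (k : Kkind).

Lemma measurable_qa : measurable_fun setT (@qa R).
Proof.
by apply: measurableT_comp; [exact: measurable_fst|]; apply: measurableT_comp;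
  exact: measurable_fst.
Qed.

Lemma measurable_qb : measurable_fun setT (@qb R).
Proof.
by apply: measurableT_comp; [exact: measurable_snd|]; apply: measurableT_comp;
  exact: measurable_fst.
Qed.

Lemma measurable_qc : measurable_fun setT (@qc R).
Proof. by apply: measurableT_comp; [exact: measurable_snd|exact: measurable_fst]. Qed.

Lemma measurable_qd : measurable_fun setT (@qd R).
Proof. exact: measurable_snd. Qed.

Lemma measurable_qnorm : measurable_fun setT (@qnorm R).
Proof.
apply: (measurableT_comp (continuous_measurable_fun (@sqrt_continuous R))).
by do 3?apply: measurable_funD; apply: measurable_funX;
  (exact: measurable_qa || exact: measurable_qb || exact: measurable_qc || exact: measurable_qd).
Qed.

Lemma measurable_preimage_set1 (f : quat R -> R) (r : R) :
  measurable_fun setT f -> measurable (f @^-1` [set r]).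
Proof. by move=> mf; rewrite -[_ @^-1` _]setTI; apply: mf => //; exact: measurable_set1. Qed.

Lemma measurable_Kset k : measurable (@Kset R k).
Proof.
case: k => /=; last exact: measurableT.
- rewrite (_ : [set _ | _] = @qb R @^-1` [set 0] `&` (@qc R @^-1` [set 0] `&` @qd R @^-1` [set 0])).
    by do 2?apply: measurableI; apply: measurable_preimage_set1;
      (exact: measurable_qb || exact: measurable_qc || exact: measurable_qd).
  by apply/seteqP; split.
- rewrite (_ : [set _ | _] = @qc R @^-1` [set 0] `&` @qd R @^-1` [set 0]).
    by apply: measurableI; apply: measurable_preimage_set1;
      (exact: measurable_qc || exact: measurable_qd).
  by apply/seteqP; split.
Qed.

Lemma measurable_Uset k : measurable (@Uset R k).
Proof.
apply: measurableI; first exact: measurable_Kset.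
exact: measurable_preimage_set1 measurable_qnorm.
Qed.

End QuaternionMeasurability.

(* The sigma-algebra on [quat R] is a product one, not a Borel one, so continuity is
   turned into measurability by rounding to finer and finer grids: each rounding has
   countably many measurable fibres. *)
Section QuaternionGrid.
Variable R : realType.
Implicit Types (q : quat R) (n : nat).

Definition qfloor n q : int * int * int * int :=
  let N := n.+1%:R in
  (Num.floor (qa q * N), Num.floor (qb q * N), Num.floor (qc q * N), Num.floor (qd q * N)).

Definition qgrid n (z : int * int * int * int) : quat R :=
  let N := n.+1%:R in mkq (z.1.1.1%:~R / N) (z.1.1.2%:~R / N) (z.1.2%:~R / N) (z.2%:~R / N).

Definition qround n q := qgrid n (qfloor n q).

Lemma measurable_floor_preimage (f : quat R -> R) (m : int) :
  measurable_fun setT f -> measurable [set q | Num.floor (f q) = m].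
Proof.
move=> mf; rewrite -[X in measurable X]setTI.
rewrite (_ : [set q | _] = f @^-1` [set` `[m%:~R, (m + 1)%:~R[%R]).
  exact: mf (measurable_itv _).
by apply/seteqP; split => x /=; rewrite in_itv /= -Num.Theory.floor_eq => /eqP.
Qed.

Lemma measurable_qfloor_fiber n z : measurable (qfloor n @^-1` [set z]).
Proof.
case: z => [[[za zb] zc] zd].
have mcN (c : quat R -> R) m :
    measurable_fun setT c -> measurable [set q | Num.floor (c q * n.+1%:R) = m].
  move=> mc; apply: measurable_floor_preimage.
  by apply: measurable_funM => //; exact: measurable_cst.
rewrite (_ : _ @^-1` _ = [set q | Num.floor (qa q * n.+1%:R) = za] `&`
  ([set q | Num.floor (qb q * n.+1%:R) = zb] `&`
  ([set q | Num.floor (qc q * n.+1%:R) = zc] `&` [set q | Num.floor (qd q * n.+1%:R) = zd]))).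
  by do 3?apply: measurableI; apply: mcN;
    (exact: measurable_qa || exact: measurable_qb || exact: measurable_qc || exact: measurable_qd).
by apply/seteqP; split => q /=; rewrite /qfloor; [case=> -> -> -> -> | case=> -> [-> [-> ->]]].
Qed.

Lemma floor_grid_close (x N : R) : 0 < N -> `|x - (Num.floor (x * N))%:~R / N| < N^-1.
Proof.
move=> N0; have /andP[h1 h2] := Num.Theory.floor_itv (x * N); rewrite intrD in h2.
set f := (Num.floor _)%:~R in h1 h2 *.
have -> : x - f / N = (x * N - f) / N by rewrite mulrBl mulfK ?gt_eqF.
rewrite normrM ger0_norm ?subr_ge0 // ger0_norm ?invr_ge0 ?ltW //.
by rewrite -[X in _ < X]mul1r ltr_pM2r ?invr_gt0 //; lra.
Qed.

Lemma qround_close n q : qnorm (qsub q (qround n q)) < 2 / n.+1%:R.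
Proof.
have N0 : 0 < n.+1%:R :> R by rewrite ltr0n.
set t := n.+1%:R^-1 : R.
have t0 : 0 < t by rewrite invr_gt0.
have sq x : (x - (Num.floor (x * n.+1%:R))%:~R / n.+1%:R) ^+ 2 < t ^+ 2.
  by rewrite -real_normK ?num_real // ltr_pXn2r ?nnegrE ?normr_ge0 ?ltW // floor_grid_close.
rewrite /qnorm /qsub /qround /qfloor /qgrid /mkq /qa /qb /qc /qd /=.
rewrite -[X in _ < X](@ger0_norm _ (2 * t)) ?mulr_ge0 ?ltW // -sqrtr_sqr.
rewrite ltr_sqrt ?exprn_gt0 ?mulr_gt0 //.
have := sq q.1.1.1; have := sq q.1.1.2; have := sq q.1.2; have := sq q.2.
rewrite -/t !expr2; nra.
Qed.

Lemma measurable_of_qnorm_continuous (g : quat R -> R) :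
  (forall q e, 0 < e -> exists2 r, 0 < r & forall q', qnorm (qsub q q') < r -> `|g q - g q'| < e) ->
  measurable_fun setT g.
Proof.
move=> gc; apply: (@measurable_fun_cvg _ _ _ _ (fun n q => g (qround n q))).
  by move=> n; exact: (measurable_comp_countable_fibers (g \o qgrid n) (measurable_qfloor_fiber n)).
move=> q _; apply/cvgrPdist_lt => e e0; have [r r0 hr] := gc q e e0.
near=> n; apply: hr; apply: (lt_le_trans (qround_close n q)).
rewrite ler_pdivrMr ?ltr0n // mulrC -ler_pdivrMr //.
have : 2 / r <= n%:R by near: n; exact: nbhs_infty_ger.
by move/le_trans; apply; rewrite ler_nat.
Unshelve. all: by end_near.
Qed.

End QuaternionGrid.

Section QuaternionProjection.
Variable R : realType.
Implicit Types (p q : quat R) (k : Kkind).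

Definition qproj k q : quat R :=
  match k with
  | KR => mkq (qa q) 0 0 0
  | KC => mkq (qa q) (qb q) 0 0
  | KH => q
  end.

Lemma Kset_qproj k q : Kset k (qproj k q).
Proof. by case: k. Qed.

Lemma qproj_id k q : Kset k q -> qproj k q = q.
Proof.
case: q => [[[x y] z] w]; case: k; rewrite //= /mkq /qa /qb /qc /qd /=.
- by case=> -> [-> ->].
- by case=> -> ->.
Qed.

Lemma qnorm_sub_qproj k p q : qnorm (qsub (qproj k p) (qproj k q)) <= qnorm (qsub p q).
Proof.
case: p => [[[x y] z] w]; case: q => [[[x' y'] z'] w'].
case: k; rewrite /= /qnorm /qsub /mkq /qa /qb /qc /qd /=; apply: ler_wsqrtr;
  rewrite ?subrr ?expr0n /= ?addr0 //.
- by have := sqr_ge0 (y - y'); have := sqr_ge0 (z - z'); have := sqr_ge0 (w - w'); lra.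
- by have := sqr_ge0 (z - z'); have := sqr_ge0 (w - w'); lra.
Qed.

End QuaternionProjection.

Section AveragedDistance.
Variables (R : realType) (k : Kkind) (E : zmodType) (smul : quat R -> E -> E).
Variables (d : E -> E -> R) (C0 C1 C2 C3 : R) (mu : probability (quat R) R).
Hypotheses (hV : K_vector_space k smul) (hm : is_metric d) (htvs : is_tvs k smul d).
Hypotheses (hT : translation_invariant d C0) (hL : lipschitz_multiplicative k smul d C1 C2 C3).
Hypothesis (hmu : right_invariant_haar k mu).
Implicit Types (a b x y : E) (u : quat R).

Let dU a b u := d (smul u a) (smul u b).

Lemma measurable_smul_dist a b : measurable_fun (Uset k) (dU a b).
Proof.
have [_ smul_cont] := htvs.
pose g q := dU a b (qproj k q).
apply: (@eq_measurable_fun _ _ _ _ _ g) => [u /set_mem [Ku _]|]; first by rewrite /g qproj_id.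
apply: (measurable_funS _ (@subsetT _ _)) => //.
apply: measurable_of_qnorm_continuous => q e e0.
have e20 : 0 < e / 2 by rewrite divr_gt0.
have [ra ra0 ha] := smul_cont (qproj k q) a (e / 2) (Kset_qproj k q) e20.
have [rb rb0 hb] := smul_cont (qproj k q) b (e / 2) (Kset_qproj k q) e20.
exists (Order.min ra rb); first by rewrite lt_min ra0 rb0.
move=> q' /(le_lt_trans (qnorm_sub_qproj k q q')); rewrite lt_min => /andP[qa' qb'].
have := ha _ a (Kset_qproj k q') qa'; have := hb _ b (Kset_qproj k q') qb'.
rewrite !dxx // => /(_ rb0) db /(_ ra0) da.
by rewrite (le_lt_trans (dist_dist_le hm _ _ _ _)) // [e]splitr ltrD.
Qed.

Lemma smul_dist_bounds a b u : Uset k u ->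
  C1^-1 * d a b - C2 - C3 <= dU a b u <= C1 * d a b + C2 + C3.
Proof.
move=> [Ku u1]; have [_ _ _ dZ] := hL; have [lo hi] := dZ u a b Ku.
by rewrite u1 !mulr1 in lo hi; rewrite lo hi.
Qed.

Let mU : measurable (Uset k) := @measurable_Uset R k.
Let muU : mu (Uset k) = 1%E := hmu.1.

Lemma integrable_smul_dist a b : mu.-integrable (Uset k) (EFin \o dU a b).
Proof.
apply: (bounded_integrable mu mU (M := C1 * d a b + C2 + C3) (measurable_smul_dist a b)) => u Uu.
have /andP[_ hi] := smul_dist_bounds a b Uu.
by rewrite ger0_norm //; exact: d_ge0.
Qed.

Lemma d0_bounds a b :
  C1^-1 * d a b - C2 - C3 <= d0_of k smul d mu a b <= C1 * d a b + C2 + C3.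
Proof.
exact: (Rintegral_bounds mU muU (measurable_smul_dist a b) (@smul_dist_bounds a b)).
Qed.

Lemma d0_ge0 a b : 0 <= d0_of k smul d mu a b.
Proof. by apply: Rintegral_ge0 => u _; exact: (d_ge0 hm). Qed.

Lemma d0_dist0D_le x y :
  d0_of k smul d mu (x + y) 0 <= d0_of k smul d mu x 0 + d0_of k smul d mu y 0 + C0.
Proof.
have [smulDr _] := hV.
apply: (le_Rintegral_add mU muU); try exact: integrable_smul_dist.
move=> u [Ku _]; rewrite /dU !(smul0 hV) // smulDr //; exact: dist0D_le.
Qed.

End AveragedDistance.

Unset Implicit Arguments.

Theorem proposition4 (R : realType) (k : Kkind) (E : zmodType)
  (smul : quat R -> E -> E) (d : E -> E -> R) (C0 C1 C2 C3 : R)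
  (mu : probability (quat R) R) :
  K_vector_space k smul ->
  is_metric d ->
  is_tvs k smul d ->
  translation_invariant d C0 ->
  lipschitz_multiplicative k smul d C1 C2 C3 ->
  right_invariant_haar k mu ->
  let d0 := d0_of k smul d mu in
  let delta := asymp_of smul d in
  let delta0 := asymp_of smul d0 in
  let E0 := [set x | forall u, Uset k u -> delta (smul u x) 0 = 0] in
  let E1 := [set x | delta0 x 0 = 0] in
  E0 = E1 /\
  maximal_bounded_subspace k smul d0 E0 /\
  maximal_bounded_subspace k smul d E0.
Proof.
move=> hV hm htvs hT hL hmu d0 delta delta0 E0 E1.
rewrite {}/E0 {}/E1 {}/delta {}/delta0 {}/d0.
have d0_ge0 := d0_ge0 k smul mu hm.
have d0_dist0D_le := d0_dist0D_le hV hm htvs hT hL hmu.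
have le_d0 x y := proj1 (andP (d0_bounds hm htvs hL hmu x y)).
have d0_le x y := proj2 (andP (d0_bounds hm htvs hL hmu x y)).
have E1P := asymp_comparable_eq0P hV hm hT hL d0_ge0 d0_dist0D_le d0_le le_d0.
have -> : [set x | asymp_of smul (d0_of k smul d mu) x 0 = 0] = orbit_bounded k smul d.
  by apply/seteqP; split => x /E1P.
rewrite (E0_orbit_bounded hV hm hT hL).
split=> //; split; last exact: (maximal_orbit_bounded hV hm hT hL).
exact: (maximal_orbit_bounded_comparable hV hm hT hL d0_le le_d0).
Qed.
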